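(* Each of the following sequences $(a_n)_{n\ge0}$ has the property that, for every $n\ge0$, the polynomial $\sum_{i=0}^n a_ix^i$ has exactly $n\bmod 2$ real roots counted with multiplicity: $a_n=\binom{n+k}{k}$ for any fixed integer $k\ge 0$; the Catalan numbers $a_n=\frac{1}{n+1}\binom{2n}{n}$; $a_n=\binom{2n}{n}$; $a_n=\binom{2n+1}{n}$; $a_n=n!$; $a_n=(2n-1)!!$; $a_n=(2n)!!$.
   Context: $(2n-1)!!=1\cdot3\cdots(2n-1)$ and $(2n)!!=2\cdot4\cdots(2n)$, with both equal to $1$ for $n=0$. *)

From HB Require Import structures.
From mathcomp Require Import all_boot all_order all_algebra.
Set Implicit Arguments. Unset Strict Implicit. Unset Printing Implicit Defensive.
Import Order.TTheory GRing.Theory Num.Theory.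
Local Open Scope ring_scope.

Definition partial_poly (R : rcfType) (a : nat -> nat) (n : nat) : {poly R} :=
  \sum_(i < n.+1) (a i)%:R *: 'X^i.

Definition num_real_roots_mult (R : rcfType) (p : {poly R}) (k : nat) : Prop :=
  exists (s : seq R) (q : {poly R}),
    [/\ p = (\prod_(r <- s) ('X - r%:P)) * q,
        forall x : R, ~~ root q x
      & size s = k].

Definition parity_roots_property (R : rcfType) (a : nat -> nat) : Prop :=
  forall n : nat, num_real_roots_mult (partial_poly R a n) (n %% 2)%N.

Definition catalan (n : nat) : nat := ('C(n.*2, n) %/ n.+1)%N. (* exact division *)
Definition odd_dfact (n : nat) : nat := (\prod_(i < n) (2 * i + 1))%N.
Definition even_dfact (n : nat) : nat := (\prod_(i < n) (2 * i + 2))%N.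

From HB Require Import structures.
From mathcomp Require Import all_boot all_order all_algebra.
From mathcomp Require Import polyorder polyrcf.
From mathcomp Require Import ring zify.
Import Order.TTheory GRing.Theory Num.Theory.
Set Implicit Arguments. Unset Strict Implicit. Unset Printing Implicit Defensive.
Local Open Scope ring_scope.

(* All seven sequences satisfy a first-order "hypergeometric" recurrence
     (C(n+1) + D) a_(n+1) = (A n + B) a_n       with A, B > 0, a_0 > 0,
   and the theorem holds for every such sequence.  Writing P_n for the
   partial sum sum_(i <= n) a_i x^i, the recurrence gives the differential
   identity
     x (C - A x) P_n' = (B x - D) P_n + D a_0 - (A n + B) a_n x^(n+1).
   Since P_n > 0 on [0, +oo), all real roots are negative, where the weight
   x (C - A x) is negative.  Hence at a root x:
   - n even: x^(n+1) < 0 forces P_n'(x) < 0, impossible at the largest root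
     (P_n is positive just right of it), so P_n has no real root;
   - n odd: P_n has a root (even size), P_n'' < 0 at a double root, and
     P_n' > 0 at a root propagates to all smaller roots; as the largest root
     has P_n' >= 0, every root is simple with P_n' > 0, hence it is unique.
   The file first proves these sign criteria for polynomials over a real
   closed field, then the identity for partial sums of a hypergeometric
   sequence, then the recurrences of the seven sequences. *)

Section SignNearRoots.
Variable R : rcfType.
Implicit Types (p q : {poly R}) (a b r x y z : R).

Lemma sgp_right_witness p r b : p != 0 -> r < b ->
  exists2 y, y \in `]r, b[ & Num.sg p.[y] = sgp_right p r.
Proof.
move=> p0 rb; have [y hy] := neighpr_wit rb p0.
exists y; last exact: sgr_neighpr hy.
have := next_root_in p r b; rewrite (max_idPl (ltW rb)) in_itv /= => /andP[_ nb].
by move: hy; rewrite /neighpr !in_itv /= => /andP[-> /lt_le_trans ->].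
Qed.

Lemma sgp_left_witness p a z : p != 0 -> a < z ->
  exists2 y, y \in `]a, z[ & Num.sg p.[y] = (-1) ^+ odd (\mu_z p) * sgp_right p z.
Proof.
move=> p0 az; have [y hy] := neighpl_wit az p0.
exists y; last exact: sgr_neighpl hy.
have := prev_root_in p a z; rewrite (min_idPl (ltW az)) in_itv /= => /andP[].
rewrite bnd_simp => ap _.
by move: hy; rewrite /neighpl !in_itv /= => /andP[/(le_lt_trans ap) -> ->].
Qed.

Lemma sgp_right_ge0 q r : sgp_right q r = 1 -> 0 <= q.[r].
Proof.
have [/rootP -> //|nr] := boolP (root q r).
by rewrite sgp_rightNroot // => /eqP; rewrite sgr_cp0 => /ltW.
Qed.

Lemma sgp_right_simple_root p r : root p r -> p^`().[r] != 0 ->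
  sgp_right p r = Num.sg p^`().[r].
Proof. by move=> rr d0; rewrite sgp_right_deriv // sgp_rightNroot. Qed.

Lemma mu_simple_root p r : root p r -> p^`().[r] != 0 -> \mu_r p = 1%N.
Proof.
move=> rr d0; have p0 : p != 0 by apply: contraNneq d0 => ->; rewrite deriv0 horner0.
have := mu_deriv rr; rewrite muNroot // => /esym/eqP; rewrite subn_eq0.
by have := mu_gt0 r p0; rewrite rr; case: (\mu_r p) => [|[]].
Qed.

Lemma sgp_right_gap p r b : r < b -> 0 < p.[b] ->
  {in `]r, b[, forall x, ~~ root p x} -> sgp_right p r = 1.
Proof.
move=> rb pb gap; have p0 : p != 0 by apply: contraTneq pb => ->; rewrite horner0 ltxx.
have [y hy <-] := sgp_right_witness p0 rb.
have gap' : {in `]r, b], forall x, ~~ root p x}.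
  move=> x; rewrite in_itv /= => /andP[rx]; rewrite le_eqVlt => /predU1P[->|xb].
    by rewrite rootE gt_eqF.
  by apply: gap; rewrite in_itv /= rx xb.
rewrite (polyrN0_itv gap' (x := b)) ?gtr0_sg //.
  by rewrite in_itv /= rb lexx.
by rewrite in_itv /= (itvP hy) ltW ?(itvP hy).
Qed.

Lemma last_root_before p x b : p != 0 -> x < b -> root p x ->
  exists r, [/\ x <= r, r < b, root p r & {in `]r, b[, forall x, ~~ root p x}].
Proof.
move=> p0 xb rx; case: (prev_rootP p x b) => [/eqP|r _ /rootP rr|_ _ _ gap].
- by rewrite (negPf p0).
- by rewrite in_itv /= => /andP[xr rb] gap; exists r; split => //; apply: ltW.
- by exists x.
Qed.

(* If p' > 0 at every root, p has at most one root: between two consecutive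
   roots p would be positive on the right of the first, negative on the left
   of the second, yet of constant sign. *)
Lemma pos_slope_roots_unique p x y : (forall z, root p z -> 0 < p^`().[z]) ->
  root p x -> root p y -> x = y.
Proof.
move=> slope; wlog xy : x y / x <= y.
  move=> hw rx ry; case: (leP x y) => [xy|/ltW yx]; first exact: hw.
  by symmetry; apply: hw.
move: xy; rewrite le_eqVlt => /predU1P[// | xy] rx ry; exfalso.
have p0 : p != 0 by apply: contraTneq (slope _ rx) => ->; rewrite deriv0 horner0 ltxx.
have [r [_ ry' rr gap]] := last_root_before p0 xy rx.
have [dr dy] := (slope r rr, slope y ry).
have [u hu] := sgp_right_witness p0 ry'.
rewrite sgp_right_simple_root ?gt_eqF // (gtr0_sg dr) => su.
have [v hv] := sgp_left_witness p0 ry'.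
rewrite sgp_right_simple_root ?gt_eqF // (gtr0_sg dy) mu_simple_root ?gt_eqF //.
rewrite mulN1r => sv.
have := polyrN0_itv gap hu hv; rewrite su sv => eN1.
by have := ltrN10 R; rewrite eN1 ltr10.
Qed.
End SignNearRoots.

Section RootCriteria.
Variable R : rcfType.
Implicit Types (p : {poly R}) (r x y : R).

Lemma root_lt0 p x : (forall y, 0 <= y -> 0 < p.[y]) -> root p x -> x < 0.
Proof.
by move=> pos rx; rewrite ltNge; apply: contraTN rx => /pos/gt_eqF; rewrite rootE => ->.
Qed.

(* Criterion for no real root: p > 0 on [0, +oo) and p' < 0 at negative roots;
   the largest root would contradict p > 0 just right of it. *)
Lemma no_root_of_neg_slope p : (forall x, 0 <= x -> 0 < p.[x]) ->
  (forall x, x < 0 -> root p x -> p^`().[x] < 0) -> forall x, ~~ root p x.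
Proof.
move=> pos slope x; apply/negP => rx.
have p0 : p != 0 by apply: contraTneq (pos 0 (lexx 0)) => ->; rewrite horner0 ltxx.
have [r [_ r0 rr gap]] := last_root_before p0 (root_lt0 pos rx) rx.
have := sgp_right_gap r0 (pos 0 (lexx 0)) gap.
by rewrite sgp_right_deriv // => /sgp_right_ge0; rewrite leNgt slope.
Qed.

Lemma unique_root_criterion p x0 : (forall x, 0 <= x -> 0 < p.[x]) -> root p x0 ->
  (forall x, x < 0 -> root p x -> p^`().[x] = 0 -> p^`()^`().[x] < 0) ->
  (forall x y, x <= y -> y < 0 -> root p x -> root p y ->
     0 < p^`().[y] -> 0 < p^`().[x]) ->
  exists r, [/\ root p r, 0 < p^`().[r] & forall x, root p x -> x = r].
Proof.
move=> pos rx0 double mono.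
have p0 : p != 0 by apply: contraTneq (pos 0 (lexx 0)) => ->; rewrite horner0 ltxx.
have [r [_ r0 rr gap]] := last_root_before p0 (root_lt0 pos rx0) rx0.
have right_pos := sgp_right_gap r0 (pos 0 (lexx 0)) gap.
have dr : 0 < p^`().[r].
  have d_ge0 : 0 <= p^`().[r] by apply: sgp_right_ge0; rewrite -sgp_right_deriv.
  rewrite lt_def d_ge0 andbT; apply/eqP => d0.
  move: right_pos; rewrite sgp_right_deriv // [in LHS]sgp_right_deriv; last exact/rootP.
  by move/sgp_right_ge0; rewrite leNgt double.
have below_r x : root p x -> x <= r.
  move=> rx; rewrite leNgt; apply/negP => xr.
  by have := gap x; rewrite in_itv /= xr (root_lt0 pos rx) rx => /(_ isT).
have slope z : root p z -> 0 < p^`().[z].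
  by move=> rz; apply: mono (below_r z rz) r0 rz rr dr.
by exists r; split=> // x rx; apply: pos_slope_roots_unique slope rx rr.
Qed.

Lemma noroot_num_real_roots p : (forall x, ~~ root p x) -> num_real_roots_mult p 0.
Proof. by move=> nr; exists [::], p; rewrite big_nil mul1r. Qed.

Lemma simple_root_num_real_roots p r : root p r -> p^`().[r] != 0 ->
  (forall x, root p x -> x = r) -> num_real_roots_mult p 1.
Proof.
move=> rr dr only_r; have [q pq] := factor_theorem _ _ rr.
exists [:: r], q; split => //; first by rewrite big_seq1 mulrC.
move=> x; apply/negP => qx.
have xr : x = r by apply: only_r; rewrite pq rootM qx.
move: dr; rewrite pq derivM !hornerE subrr mulr0 add0r -xr (rootP qx) mul0r.
by rewrite eqxx.
Qed.
End RootCriteria.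

Lemma even_expr_le_neg (R : realDomainType) m (x y : R) : ~~ odd m ->
  x <= y -> y <= 0 -> y ^+ m <= x ^+ m.
Proof.
move=> m_even xy y0; have e (z : R) : z ^+ m = (- z) ^+ m.
  by rewrite exprNn -signr_odd (negPf m_even) expr0 mul1r.
rewrite (e x) (e y) lerXn2r ?nnegrE ?oppr_ge0 ?lerN2 //.
exact: le_trans xy y0.
Qed.

Definition ratio_recurrence (a : nat -> nat) (A B C D : nat) : Prop :=
  forall n, ((C * n + C + D) * a n.+1 = (A * n + B) * a n)%N.

Section RatioRecurrence.
Variable R : rcfType.
Variables (a : nat -> nat) (A B C D : nat).
Hypothesis rec : ratio_recurrence a A B C D.
Implicit Types x y : R.

Local Notation P n := (partial_poly R a n).
Local Notation K n := (((A * n + B) * a n)%N%:R : R).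

Lemma partial_polyS n : P n.+1 = P n + (a n.+1)%:R *: 'X^(n.+1).
Proof. by rewrite /partial_poly big_ord_recr. Qed.

Lemma partial_poly0 : P 0 = (a 0)%:R%:P.
Proof. by rewrite /partial_poly big_ord1 expr0 alg_polyC. Qed.

(* The differential identity satisfied by the partial sums, by induction on n
   (the recurrence turns the new top coefficient of P (n+1) into K n). *)
Lemma partial_poly_ode n :
  'X * (C%:R%:P - A%:R *: 'X) * (P n)^`() =
  (B%:R *: 'X - D%:R%:P) * P n + (D * a 0)%N%:R%:P - K n *: 'X^(n.+1).
Proof.
elim: n => [|n IH].
  rewrite partial_poly0 derivC mulr0 muln0 add0n expr1 natrM polyCM.
  rewrite -!mul_polyC natrM polyCM; ring.
rewrite partial_polyS derivD mulrDr IH derivZ derivXn /=.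
have -> : K n = ((C * n + C + D) * a n.+1)%N%:R by rewrite rec.
rewrite -!mul_polyC -mulr_natr !exprS; ring.
Qed.

Lemma partial_poly_ode_at n x : x * (C%:R - A%:R * x) * (P n)^`().[x] =
  (B%:R * x - D%:R) * (P n).[x] + (D * a 0)%N%:R - K n * x ^+ n.+1.
Proof. by have := congr1 (horner^~ x) (partial_poly_ode n); rewrite !hornerE. Qed.

Lemma partial_poly_ode2_at n x : (P n).[x] = 0 -> (P n)^`().[x] = 0 ->
  x * (C%:R - A%:R * x) * (P n)^`()^`().[x] = - (K n * n.+1%:R * x ^+ n).
Proof.
move=> p0 d0; have := congr1 (fun q => q^`().[x]) (partial_poly_ode n).
rewrite /= !(derivM, derivD, derivB, derivZ, derivC, derivX, derivXn, derivN).
rewrite !hornerE p0 d0 hornerMn hornerXn /= -mulr_natr.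
by rewrite !(mul1r, mulr0, add0r, addr0, subr0, sub0r) => ->; ring.
Qed.

Hypotheses (a0_gt0 : (0 < a 0)%N) (A_gt0 : (0 < A)%N) (B_gt0 : (0 < B)%N).

Lemma term_gt0 n : (0 < a n)%N.
Proof.
elim: n => // n IH.
have : (0 < (C * n + C + D) * a n.+1)%N.
  by rewrite rec muln_gt0 IH addn_gt0 B_gt0 orbT.
by rewrite muln_gt0 => /andP[].
Qed.

Lemma K_gt0 n : 0 < K n.
Proof. by rewrite ltr0n muln_gt0 term_gt0 addn_gt0 B_gt0 orbT. Qed.

Lemma partial_poly_gt0 n x : 0 <= x -> 0 < (P n).[x].
Proof.
move=> x0; rewrite /partial_poly horner_sum big_ord_recl /= hornerZ hornerXn mulr1.
apply: (@lt_le_trans _ _ (a 0)%:R); first by rewrite ltr0n.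
rewrite lerDl; apply: sumr_ge0 => i _.
by rewrite hornerZ hornerXn mulr_ge0 ?exprn_ge0 ?ler0n.
Qed.

Lemma partial_poly_size n : size (P n) = n.+1.
Proof.
have -> : P n = \poly_(i < n.+1) (a i)%:R by rewrite poly_def.
by rewrite size_poly_eq // pnatr_eq0 -lt0n term_gt0.
Qed.

Lemma ode_weight_lt0 x : x < 0 -> x * (C%:R - A%:R * x) < 0.
Proof.
move=> x0; rewrite nmulr_rlt0 // subr_gt0.
by apply: (lt_le_trans _ (ler0n _ C)); rewrite pmulr_rlt0 // ltr0n.
Qed.

(* Even n: at a root x < 0, x^(n+1) < 0 makes the identity force P' < 0. *)
Lemma partial_poly_even_noroot n : ~~ odd n -> forall x, ~~ root (P n) x.
Proof.
move=> n_even; apply: no_root_of_neg_slope => [|x x0 /rootP px].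
  exact: partial_poly_gt0.
have := partial_poly_ode_at n x; rewrite px mulr0 add0r => ode.
rewrite -(nmulr_rgt0 _ (ode_weight_lt0 x0)) ode subr_gt0.
apply: (lt_le_trans _ (ler0n _ _)).
by rewrite pmulr_rlt0 ?K_gt0 // exprn_odd_lt0.
Qed.

(* Odd n: a root exists since P n has even size; at a double root the
   differentiated identity gives P'' < 0; and since x^(n+1) decreases on
   ]-oo, 0[, the sign of P' at roots can only improve going left. *)
Lemma partial_poly_odd_root n : odd n ->
  exists r, [/\ root (P n) r, 0 < (P n)^`().[r] & forall x, root (P n) x -> x = r].
Proof.
move=> n_odd; have [z rz] : {x | root (P n) x}.
  by apply: odd_poly_root; rewrite partial_poly_size /= negbK.
apply: (unique_root_criterion (partial_poly_gt0 n) rz).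
  move=> x x0 /rootP px dx.
  rewrite -(nmulr_rgt0 _ (ode_weight_lt0 x0)) partial_poly_ode2_at // oppr_gt0.
  by rewrite pmulr_rlt0 ?exprn_odd_lt0 // mulr_gt0 ?K_gt0 ?ltr0n.
move=> x y xy y0 /rootP px /rootP py dy.
have x0 : x < 0 := le_lt_trans xy y0.
have := partial_poly_ode_at n y; rewrite py mulr0 add0r => ode_y.
have := partial_poly_ode_at n x; rewrite px mulr0 add0r => ode_x.
have ode_y_lt0 : (D * a 0)%N%:R - K n * y ^+ n.+1 < 0.
  by rewrite -ode_y nmulr_rlt0 ?ode_weight_lt0.
rewrite -(nmulr_rlt0 _ (ode_weight_lt0 x0)) ode_x; apply: (le_lt_trans _ ode_y_lt0).
rewrite lerD2l lerN2 ler_pM2l ?K_gt0 //.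
by apply: even_expr_le_neg (ltW y0); rewrite /= ?negbK.
Qed.

Theorem ratio_recurrence_parity_roots : parity_roots_property R a.
Proof.
move=> n; rewrite modn2; case: (boolP (odd n)) => [n_odd | n_even].
  have [r [rr dr only_r]] := partial_poly_odd_root n_odd.
  by apply: simple_root_num_real_roots rr _ only_r; rewrite gt_eqF.
exact/noroot_num_real_roots/partial_poly_even_noroot.
Qed.
End RatioRecurrence.

(* The recurrences of the seven sequences, from the library identities
   mul_bin_down : n 'C(n-1, m) = (n - m) 'C(n, m) and
   mul_bin_diag : n 'C(n-1, m) = m.+1 'C(n, m.+1). *)
Lemma binomial_ratio k : ratio_recurrence (fun n => 'C(n + k, k)) 1 k.+1 1 0.
Proof.
move=> n; have := mul_bin_down (n.+1 + k) k.
rewrite addSn /= (_ : ((n + k).+1 - k = n.+1)%N); last by lia.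
by move: ('C(_, _)) ('C(_, _)) => X Y; nia.
Qed.

Lemma factorial_ratio : ratio_recurrence factorial 1 1 0 1.
Proof. by move=> n; rewrite factS; nia. Qed.

Lemma odd_dfact_ratio : ratio_recurrence odd_dfact 2 1 0 1.
Proof. by move=> n; rewrite /odd_dfact big_ord_recr /=; nia. Qed.

Lemma even_dfact_ratio : ratio_recurrence even_dfact 2 2 0 1.
Proof. by move=> n; rewrite /even_dfact big_ord_recr /=; nia. Qed.

Lemma central_binomial_ratio : ratio_recurrence (fun n => 'C(n.*2, n)) 4 2 1 0.
Proof.
move=> n /=; have diag := mul_bin_diag (n.+1.*2) n.
have down := mul_bin_down (n.*2.+1) n.
rewrite doubleS /= in diag.
rewrite (_ : (n.*2.+1 - n = n.+1)%N) in down; last by lia.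
move: diag down; rewrite doubleS.
by move: ('C(n.*2.+2, n.+1)) ('C(n.*2.+1, n)) ('C(n.*2, n)) => Z Y X; nia.
Qed.

Lemma odd_central_binomial_ratio :
  ratio_recurrence (fun n => 'C(n.*2.+1, n)) 4 6 1 1.
Proof.
move=> n /=; have diag := mul_bin_diag (n.+1.*2.+1) n.
have down := mul_bin_down (n.+1.*2) n.
rewrite doubleS /= in diag down.
rewrite (_ : (n.*2.+2 - n = n.+2)%N) in down; last by lia.
apply/eqP; rewrite -(eqn_pmul2l (ltn0Sn n)); apply/eqP; rewrite doubleS.
move: diag down (congr1 (muln n.+2) diag) (congr1 (muln n.*2.+3) down).
by move: ('C(n.*2.+3, n.+1)) ('C(n.*2.+2, n)) ('C(n.*2.+1, n)) => Z W X; nia.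
Qed.

Lemma catalan_central_binomial n : (n.+1 * catalan n)%N = 'C(n.*2, n).
Proof.
have left := mul_bin_left (n.*2) n.
rewrite (_ : (n.*2 - n = n)%N) in left; last by lia.
have e : 'C(n.*2, n) = (n.+1 * ('C(n.*2, n) - 'C(n.*2, n.+1)))%N.
  by move: left; move: ('C(n.*2, n)) ('C(n.*2, n.+1)) => X Y; nia.
by rewrite /catalan {1}e mulKn // -e.
Qed.

Lemma catalan_ratio : ratio_recurrence catalan 4 2 1 1.
Proof.
move=> n; apply/eqP; rewrite -(eqn_pmul2l (ltn0Sn n)); apply/eqP.
by have := central_binomial_ratio n; rewrite /= -!catalan_central_binomial; nia.
Qed.

Theorem mainTheorem7 (R : rcfType) :
  (forall k : nat, parity_roots_property R (fun n => 'C(n + k, k))) /\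
  parity_roots_property R catalan /\
  parity_roots_property R (fun n => 'C(n.*2, n)) /\
  parity_roots_property R (fun n => 'C(n.*2.+1, n)) /\
  parity_roots_property R (fun n => n`!) /\
  parity_roots_property R odd_dfact /\
  parity_roots_property R even_dfact.
Proof.
split.
  by move=> k; apply: ratio_recurrence_parity_roots (binomial_ratio k) _ _ _; rewrite ?binn.
split; first exact: ratio_recurrence_parity_roots catalan_ratio _ _ _.
split; first exact: ratio_recurrence_parity_roots central_binomial_ratio _ _ _.
split; first exact: ratio_recurrence_parity_roots odd_central_binomial_ratio _ _ _.
split; first exact: ratio_recurrence_parity_roots factorial_ratio _ _ _.
split.
  by apply: ratio_recurrence_parity_roots odd_dfact_ratio _ _ _; rewrite // /odd_dfact big_ord0.
by apply: ratio_recurrence_parity_roots even_dfact_ratio _ _ _; rewrite // /even_dfact big_ord0.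
Qed.
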